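(* Let $G$ be a finite $p$-group and let $N, C_1, C_2$ be normal subgroups of $G$ with $C_1\subseteq C_2$. Let $P:=\{g\in N : [g,C_2]\subseteq[C_1,N]\}$. Then: (1) $\{g\in N : b_{C_1}(g)\geq b_{C_2}(g)\}\subseteq P$; (2) $P$ is a normal subgroup of $G$; (3) if $P=N$, then $[C_1,N]=[C_2,N]$.
   Context: Commutators are $[x,y]=x^{-1}y^{-1}xy$; for $g\in G$ and a subgroup $H$, $[g,H]=\{[g,h]:h\in H\}$; for subgroups $G_1,G_2$, $[G_1,G_2]$ is the subgroup generated by all $[g_1,g_2]$, $g_i\in G_i$. For a subgroup $K$ of $G$ and $g\in G$, $b_K(g):=\log_p|K:K\cap Z_G(g)|$, where $Z_G(g)$ is the centralizer of $g$ in $G$. *)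

From mathcomp Require Import all_boot all_fingroup all_solvable.
Set Implicit Arguments. Unset Strict Implicit. Unset Printing Implicit Defensive.
Local Open Scope group_scope.

Definition bK (gT : finGroupType) (p : nat) (G K : {set gT}) (g : gT) : nat :=
  logn p #|K : K :&: 'C_G[g]|.

(* [g, H] = { [g,h] : h in H }; MathComp's [~ x, y] = x^-1 * y^-1 * x * y *)
Definition commset (gT : finGroupType) (g : gT) (H : {set gT}) : {set gT} :=
  [set [~ g, h] | h in H].

From mathcomp Require Import all_boot all_fingroup all_solvable.
Set Implicit Arguments.
Unset Strict Implicit.
Unset Printing Implicit Defensive.
Local Open Scope group_scope.

(* Since [g, c] = g^-1 * g ^ c, the set [g, K] is a translate of the K-class of
   g, so |[g, K]| = |K : C_K(g)| = p ^ b_K(g) when K is a p-group.  Hence for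
   C1 <= C2 the inequality b_C1(g) >= b_C2(g) forces [g, C2] = [g, C1], which
   lies in [C1, N] when g is in N.  The set P is closed under products because
   [x y, c] = [x, c] ^ y * [y, c], and normal because N, C2 and [C1, N] are;
   finally [C2, N] is generated by the [g, c] with g in N and c in C2. *)

Section Commset.

Variable gT : finGroupType.
Implicit Types (G K H M N : {group gT}) (g : gT).

Lemma commsetE g (K : {set gT}) : commset g K = [set g^-1 * h | h in g ^: K].
Proof. by rewrite /commset -imset_comp; apply: eq_imset => c /=; rewrite commgEl. Qed.

Lemma card_commset g K : #|commset g K| = #|K : 'C_K[g]|.
Proof. by rewrite commsetE card_imset ?index_cent1 //; apply: mulgI. Qed.

Lemma commsetS g (H K : {set gT}) : H \subset K -> commset g H \subset commset g K.
Proof. exact: imsetS. Qed.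

Lemma commset_subP g (K M : {set gT}) :
  reflect {in K, forall c, [~ g, c] \in M} (commset g K \subset M).
Proof.
apply: (iffP subsetP) => [sKM c Kc | sKM _ /imsetP[c Kc ->]]; last exact: sKM.
by apply: sKM; apply: imset_f.
Qed.

Lemma commset_sub_commg g N K : g \in N -> commset g K \subset [~: N, K].
Proof. by move=> Ng; apply/commset_subP => c Kc; apply: mem_commg. Qed.

Lemma commg_subP N K M :
  reflect {in N, forall g, commset g K \subset M} ([~: N, K] \subset M).
Proof.
apply: (iffP idP) => [sNKM g Ng | sKM].
  by apply: subset_trans sNKM; apply: commset_sub_commg.
rewrite gen_subG; apply/subsetP => _ /imset2P[g c Ng Kc ->].
exact: (commset_subP _ _ _ (sKM g Ng)).
Qed.

Lemma card_commset_pgroup (p : nat) G K g :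
  p.-group K -> K \subset G -> #|commset g K| = (p ^ bK p G K g)%N.
Proof.
move=> pK sKG; rewrite card_commset /bK setIA (setIidPl sKG) -p_part part_pnat_id //.
exact: pnat_dvd (dvdn_indexg _ _) pK.
Qed.

Lemma commset_eq_bK_le (p : nat) G H K g :
  prime p -> p.-group K -> K \subset G -> H \subset K ->
  bK p G K g <= bK p G H g -> commset g K = commset g H.
Proof.
move=> pr_p pK sKG sHK le_bHK; apply/esym/eqP.
have pH := pgroupS sHK pK.
rewrite eqEcard commsetS // (card_commset_pgroup g pK sKG).
rewrite (card_commset_pgroup g pH (subset_trans sHK sKG)).
by rewrite leq_exp2l // prime_gt1.
Qed.

Section CommsetSubgroup.

Variables G N K M : {group gT}.

Let P := [set g in N | commset g K \subset M].

Lemma group_set_commset_sub : N \subset 'N(M) -> group_set P.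
Proof.
move=> nMN; apply/group_setP; split.
  by rewrite inE group1; apply/commset_subP => c _; rewrite comm1g group1.
move=> x y /setIdP[Nx /commset_subP cxKM] /setIdP[Ny /commset_subP cyKM].
rewrite inE groupM //; apply/commset_subP => c Kc.
by rewrite commMgJ groupM ?cyKM // memJ_norm ?cxKM ?(subsetP nMN).
Qed.

Lemma norms_commset_sub :
  G \subset 'N(N) -> G \subset 'N(K) -> G \subset 'N(M) -> G \subset 'N(P).
Proof.
move=> nNG nKG nMG; apply/subsetP => x Gx; rewrite inE sub_conjg.
apply/subsetP => g /setIdP[Ng /commset_subP cgKM]; rewrite mem_conjgV.
rewrite inE memJ_norm ?(subsetP nNG) // Ng; apply/commset_subP => c Kc.
rewrite -(conjgKV x c) -conjRg memJ_norm ?(subsetP nMG) // cgKM //.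
by rewrite memJ_norm ?(subsetP nKG) ?groupV.
Qed.

End CommsetSubgroup.

End Commset.

Theorem lemma1 (gT : finGroupType) (p : nat) (G N C1 C2 : {group gT}) :
  prime p -> p.-group G -> N <| G -> C1 <| G -> C2 <| G -> C1 \subset C2 ->
  let P := [set g in N | commset g C2 \subset [~: C1, N]] in
  [/\ [set g in N | bK p G C2 g <= bK p G C1 g] \subset P,
      group_set P && (P <| G)
    & P = N -> [~: C1, N] = [~: C2, N]].
Proof.
move=> pr_p pG /andP[sNG nNG] /andP[_ nC1G] /andP[sC2G nC2G] sC12 P.
have nMG : G \subset 'N([~: C1, N]) by apply: normsR.
have gP : group_set P by apply: group_set_commset_sub; apply: subset_trans nMG.
have sPN : P \subset N by apply/subsetP => g /setIdP[].
split.
- apply/subsetP => g /setIdP[Ng le_b]; rewrite inE Ng.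
  rewrite (commset_eq_bK_le pr_p (pgroupS sC2G pG) sC2G sC12 le_b).
  by rewrite commGC; apply: commset_sub_commg.
- rewrite gP /normal (subset_trans sPN sNG).
  exact: (norms_commset_sub nNG nC2G nMG).
- move=> PN; apply/eqP; rewrite eqEsubset commSg // [[~: C2, N]]commGC /=.
  by apply/commg_subP => g; rewrite -{1}PN => /setIdP[].
Qed.
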